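(* Let $m,b\ge1$, $V=(\mathbb{F}_2)^{mb}$, let $\mathbf M\in\mathrm{GL}(V)$ have order $t$, and define $\alpha:V\to(\mathbb{F}_2)^{2^m bt}$ by $\alpha(v)=(\varepsilon(v),\varepsilon(\mathbf Mv),\dots,\varepsilon(\mathbf M^{t-1}v))$. Then $2^m b-(b-1)\le\dim_{\mathbb{F}_2}\langle\alpha(V)\rangle\le(2^m b-(b-1))t$.
   Context: Identify $(\mathbb{F}_2)^m$ with $\mathbb{F}_{2^m}=\mathbb{F}_2[x]/(p)$ for a primitive polynomial $p$ of degree $m$, with primitive element $\gamma$ (a root of $p$). Let $e_1,\dots,e_{2^m}$ be the standard basis of $(\mathbb{F}_2)^{2^m}$ and define $\varepsilon':\mathbb{F}_{2^m}\to(\mathbb{F}_2)^{2^m}$ by $\varepsilon'(0)=e_1$, $\varepsilon'(\gamma^i)=e_{i+1}$ for $1\le i\le2^m-1$. Writing $v\in V$ as $(v_1,\dots,v_b)$ with $v_j\in(\mathbb{F}_2)^m$, set $\varepsilon(v)=(\varepsilon'(v_1),\dots,\varepsilon'(v_b))\in(\mathbb{F}_2)^{2^m b}$. $\langle S\rangle$ denotes the $\mathbb{F}_2$-linear span. *)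

From HB Require Import structures.
From mathcomp Require Import all_boot all_order all_algebra.
Set Implicit Arguments. Unset Strict Implicit. Unset Printing Implicit Defensive.
Import GRing.Theory.
Local Open Scope ring_scope.

(* F_2 = 'F_2.  (F_2)^m is 'rV['F_2]_m, identified with F_2[x]/(p) via the
   coefficient vector w.r.t. the basis 1, x, ..., x^(m-1). *)

(* p is a primitive polynomial of degree m over F_2: irreducible of degree m,
   and its root gamma = x mod p has multiplicative order exactly 2^m - 1. *)
Definition primitive_poly (m : nat) (p : {poly 'F_2}) : Prop :=
  size p = m.+1 /\ irreducible_poly p /\
  (p %| 'X^(2 ^ m - 1) - 1) /\
  (forall k : nat, (0 < k < 2 ^ m - 1)%N -> ~~ (p %| 'X^k - 1)).

Definition vec2poly (m : nat) (v : 'rV['F_2]_m) : {poly 'F_2} :=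
  \sum_(i < m) v ord0 i *: 'X^i.

(* eps'(0) = e_1 (0-based index 0); eps'(gamma^i) = e_{i+1} (0-based index i),
   1 <= i <= 2^m - 1, where gamma^i is x^i mod p. *)
Definition eps' (m : nat) (p : {poly 'F_2}) (v : 'rV['F_2]_m) : 'rV['F_2]_(2 ^ m) :=
  \row_(j < 2 ^ m)
    (if vec2poly v == 0 then (nat_of_ord j == 0%N)
     else (0 < j)%N && ('X^j %% p == vec2poly v))%:R.

(* V = (F_2)^(m b) = 'rV_(b * m); block j (j < b) is the entries j*m .. j*m+m-1,
   i.e. row j of vec_mx v. eps(v) = (eps'(v_1), ..., eps'(v_b)). *)
Definition eps (m b : nat) (p : {poly 'F_2}) (v : 'rV['F_2]_(b * m)) :
  'rV['F_2]_(b * 2 ^ m) :=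
  mxvec (\matrix_(j < b) eps' p (row j (vec_mx v))).

Definition appM (n : nat) (M : 'M['F_2]_n) (v : 'rV['F_2]_n) : 'rV['F_2]_n :=
  (M *m v^T)^T.

Definition alpha (m b t : nat) (p : {poly 'F_2}) (M : 'M['F_2]_(b * m))
  (v : 'rV['F_2]_(b * m)) : 'rV['F_2]_(t * (b * 2 ^ m)) :=
  mxvec (\matrix_(k < t) eps p (appM (M ^+ k) v)).

Definition mx_order (n : nat) (M : 'M['F_2]_n) (t : nat) : Prop :=
  (0 < t)%N /\ M ^+ t = 1%:M /\ (forall k : nat, (0 < k < t)%N -> M ^+ k != 1%:M).

From mathcomp Require Import all_boot all_order all_algebra.
Set Implicit Arguments. Unset Strict Implicit. Unset Printing Implicit Defensive.
Import GRing.Theory.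
Local Open Scope ring_scope.
From mathcomp Require Import zify.

(* Since p is primitive, the powers gamma^1, ..., gamma^(2^m-1) are distinct and nonzero, so
   eps' is a bijection from F_2^m onto the 2^m unit vectors.  Hence eps maps V onto the set of
   b x 2^m matrices with exactly one 1 in each row; these span the matrices whose row sums all
   agree, a space of dimension 2^m b - (b - 1).  The first block of alpha(v) is eps(v), which
   gives the lower bound, and each of the t blocks of alpha(v) lies in the span of eps(V),
   which gives the upper bound. *)

Section SpanDimension.

Variable K : fieldType.

Lemma dim_span_map (vT wT : vectType K) (f : 'Hom(vT, wT)) (s : seq vT) :
  (\dim <<map f s>> <= \dim <<s>>)%N.
Proof. by rewrite -limg_span -(limg_ker_dim f <<s>>) leq_addl. Qed.

Lemma matrix_sum_rows m n (A : 'M[K]_(m, n)) : A = \sum_(i < m) delta_mx i 0 *m row i A.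
Proof.
rewrite -[A in LHS]mul1mx mx1_sum_delta mulmx_suml; apply: eq_bigr => i _.
by rewrite rowE mulmxA mul_delta_mx.
Qed.

(* Such vectors lie in the span of the [t * \dim U] vectors placing a basis vector of [U] in
   one of the [t] blocks. *)
Lemma dim_span_blocks_leq t n (s : seq 'rV[K]_(t * n)) (U : {vspace 'rV[K]_n}) :
  (forall y i, y \in s -> row i (vec_mx y) \in U) -> (\dim <<s>> <= t * \dim U)%N.
Proof.
move=> blocks_U.
pose B := [seq mxvec (delta_mx i 0 *m x : 'M[K]_(t, n)) | i <- enum 'I_t, x <- vbasis U].
have sub_B : (<<s>> <= <<B>>)%VS.
  apply/span_subvP => y s_y; rewrite -[y]vec_mxK [vec_mx y]matrix_sum_rows linear_sum /=.
  apply: memv_suml => i _; rewrite (coord_vbasis (blocks_U y i s_y)) mulmx_sumr linear_sum.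
  apply: memv_suml => k _; rewrite -scalemxAr linearZ /=; apply/memvZ/memv_span.
  by apply/allpairsP; exists (i, (vbasis U)`_k); rewrite mem_enum mem_nth ?size_tuple.
apply: leq_trans (dimvS sub_B) _; apply: leq_trans (dim_span _) _.
by rewrite size_allpairs size_enum_ord size_tuple.
Qed.

End SpanDimension.

Section OneHot.

Variable K : fieldType.

Definition onehot_mx b N (f : 'I_b -> 'I_N) : 'M[K]_(b, N) := \matrix_(i, j) (f i == j)%:R.

Definition onehot_space b N : {vspace 'rV[K]_(b * N)} :=
  <<[seq mxvec (onehot_mx f) | f : {ffun 'I_b -> 'I_N}]>>.

Lemma onehot_mx_sum b N (f : 'I_b -> 'I_N) : onehot_mx f = \sum_(i < b) delta_mx i (f i).
Proof.
apply/matrixP => i j; rewrite !mxE summxE (bigD1 i) //= big1 => [|i' /negbTE ne_i'i].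
  by rewrite !mxE eqxx addr0 eq_sym.
by rewrite mxE eq_sym ne_i'i.
Qed.

Lemma row_onehot_mx b N (f : 'I_b -> 'I_N) i : row i (onehot_mx f) = delta_mx 0 (f i).
Proof. by apply/rowP => j; rewrite !mxE eqxx eq_sym. Qed.

Lemma memv_onehot b N (f : 'I_b -> 'I_N) : mxvec (onehot_mx f) \in onehot_space b N.
Proof.
have -> : onehot_mx f = onehot_mx (finfun f) by apply/matrixP => i j; rewrite !mxE ffunE.
by apply/memv_span/map_f; rewrite mem_enum.
Qed.

Lemma dim_onehot_space_leq b N : (\dim (onehot_space b.+1 N.+1) <= (b.+1 * N).+1)%N.
Proof.
pose steps := [seq mxvec (delta_mx i (lift ord0 a) - delta_mx i ord0 : 'M[K]_(b.+1, N.+1))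
                | i <- enum 'I_b.+1, a <- enum 'I_N].
pose S := mxvec (onehot_mx (fun _ : 'I_b.+1 => (ord0 : 'I_N.+1))) :: steps.
have sub_S : (onehot_space b.+1 N.+1 <= <<S>>)%VS.
  apply/span_subvP => _ /mapP[f _ ->].
  have -> : onehot_mx f = onehot_mx (fun=> ord0) +
      \sum_(i < b.+1) (delta_mx i (f i) - delta_mx i ord0).
    by rewrite !onehot_mx_sum sumrB addrC subrK.
  rewrite linearD linear_sum /=; apply: memvD; first by rewrite memv_span ?mem_head.
  apply: memv_suml => i _; case: (unliftP ord0 (f i)) => [a -> | ->].
    by apply/memv_span/mem_behead/allpairsP; exists (i, a); rewrite !mem_enum.
  by rewrite subrr linear0 mem0v.
apply: leq_trans (dimvS sub_S) _; apply: leq_trans (dim_span _) _.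
by rewrite /= size_allpairs !size_enum_ord.
Qed.

(* Adding the [b] matrix units at the positions [(i, 0)], [i > 0], to the one-hot matrices
   yields every matrix unit, so these [b] vectors complete [onehot_space] to the whole space. *)
Lemma dim_onehot_space_geq b N : (b.+1 * N.+1 <= \dim (onehot_space b.+1 N.+1) + b)%N.
Proof.
pose C := [seq mxvec (delta_mx (lift ord0 i) ord0 : 'M[K]_(b.+1, N.+1)) | i <- enum 'I_b].
pose W := (onehot_space b.+1 N.+1 + <<C>>)%VS.
have onehot_W f : mxvec (onehot_mx f) \in W by apply/(subvP (addvSl _ _))/memv_onehot.
have C_W i : mxvec (delta_mx (lift ord0 i) ord0 : 'M[K]_(b.+1, N.+1)) \in W.
  by apply/(subvP (addvSr _ _))/memv_span/map_f; rewrite mem_enum.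
have first_col_W i : mxvec (delta_mx i ord0 : 'M[K]_(b.+1, N.+1)) \in W.
  case: (unliftP ord0 i) => [i' -> | ->]; first exact: C_W.
  have -> : delta_mx ord0 ord0 =
      onehot_mx (fun=> ord0) - \sum_(i' < b) delta_mx (lift ord0 i') (ord0 : 'I_N.+1).
    by rewrite onehot_mx_sum big_ord_recl addrK.
  rewrite linearB linear_sum /=; apply: memvB => //.
  by apply: memv_suml => i' _; apply: C_W.
have full_W : (fullv <= W)%VS.
  apply/subvP => x _; rewrite [x]row_sum_delta; apply: memv_suml => k _.
  apply: memvZ; case/mxvec_indexP: k => i j; rewrite -mxvec_delta.
  have -> : delta_mx i j = (onehot_mx (fun i' => if i' == i then j else ord0)
                            - onehot_mx (fun=> ord0)) + delta_mx i ord0.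
    rewrite !onehot_mx_sum -sumrB (bigD1 i) //= big1 => [|i' ne_i'i].
      by rewrite eqxx addr0 subrK.
    by rewrite (negbTE ne_i'i) subrr.
  by rewrite linearD linearB /=; apply: memvD => //; apply: memvB.
have := dimvS full_W; rewrite dimvf dim_matrix mul1r => /leq_trans; apply.
apply: leq_trans (dimv_add_leqif _ _).1 _; rewrite leq_add2l.
by apply: leq_trans (dim_span _) _; rewrite size_map size_enum_ord.
Qed.

Lemma dim_onehot_space b N : (0 < b)%N -> (0 < N)%N ->
  \dim (onehot_space b N) = (N * b - (b - 1))%N.
Proof.
case: b N => [|b] [|N] // _ _.
have := dim_onehot_space_leq b N; have := dim_onehot_space_geq b N; lia.
Qed.

End OneHot.

Section BlockEncoding.

Variables (K : finFieldType) (k N b : nat) (ep : 'rV[K]_k -> 'rV[K]_N).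

Definition blockwise (v : 'rV[K]_(b * k)) : 'rV[K]_(b * N) :=
  mxvec (\matrix_(j < b) ep (row j (vec_mx v))).

Definition orbit_code t (M : 'M[K]_(b * k)) (v : 'rV[K]_(b * k)) : 'rV[K]_(t * (b * N)) :=
  mxvec (\matrix_(i < t) blockwise (M ^+ i *m v^T)^T).

Lemma span_blockwise :
    (forall w, exists a, ep w = delta_mx 0 a) -> (forall a, exists w, ep w = delta_mx 0 a) ->
  <<[seq blockwise v | v : 'rV[K]_(b * k)]>>%VS = onehot_space K b N.
Proof.
move=> ep_delta ep_onto; apply/eqP; rewrite eqEsubv; apply/andP; split; apply/span_subvP.
  move=> _ /mapP[v _ ->].
  have [f ep_f] := fin_all_exists (fun j : 'I_b => ep_delta (row j (vec_mx v))).
  suff -> : blockwise v = mxvec (onehot_mx K f) by apply: memv_onehot.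
  by congr mxvec; apply/row_matrixP => j; rewrite rowK row_onehot_mx ep_f.
move=> _ /mapP[f _ ->].
have [w ep_w] := fin_all_exists (fun j : 'I_b => ep_onto (f j)).
suff -> : mxvec (onehot_mx K f) = blockwise (mxvec (\matrix_j w j)).
  by apply/memv_span/map_f; rewrite mem_enum.
by congr mxvec; apply/row_matrixP => j; rewrite /blockwise mxvecK !rowK row_onehot_mx ep_w.
Qed.

Lemma dim_span_orbit_code t (M : 'M[K]_(b * k)) : (0 < t)%N ->
  (\dim <<[seq blockwise v | v : 'rV[K]_(b * k)]>> <=
     \dim <<[seq orbit_code t M v | v : 'rV[K]_(b * k)]>> <=
     t * \dim <<[seq blockwise v | v : 'rV[K]_(b * k)]>>)%N.
Proof.
case: t => [//|t] _; apply/andP; split.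
  pose first_block := linfun (row (ord0 : 'I_t.+1) \o @vec_mx K t.+1 (b * N)).
  apply: leq_trans (dim_span_map first_block _); rewrite -map_comp.
  by rewrite (eq_map (g := blockwise)) // => v; rewrite /= lfunE /= mxvecK rowK expr0 mul1mx trmxK.
apply: dim_span_blocks_leq => _ i /mapP[v _ ->].
by rewrite mxvecK rowK memv_span ?map_f ?mem_enum.
Qed.

End BlockEncoding.

Section PrimitivePoly.

Variables (m : nat) (p : {poly 'F_2}).
Hypotheses (m_gt0 : (0 < m)%N) (p_prim : primitive_poly m p).

Lemma primitive_coprimepX i : coprimep p 'X^i.
Proof.
case: p_prim => _ [_ [dvd_p _]].
apply/coprimep_expr/(coprimep_dvdr dvd_p).
rewrite coprimepX /root !hornerE.
have : (0 < 2 ^ m - 1)%N by rewrite subn_gt0 -{1}(expn0 2) ltn_exp2l.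
by case: (2 ^ m - 1)%N => // n _; rewrite expr0n.
Qed.

Lemma primitive_modpX_neq0 i : 'X^i %% p != 0.
Proof.
apply/negP => /eqP/modp_eq0P dvd_pX.
have := coprimep_dvdl dvd_pX (primitive_coprimepX i).
by rewrite coprimepp; case: p_prim => -> _; case: m m_gt0.
Qed.

Lemma primitive_modpX_inj i j : (0 < i < 2 ^ m)%N -> (0 < j < 2 ^ m)%N ->
  ('X^i %% p == 'X^j %% p) = (i == j).
Proof.
wlog le_ij : i j / (i <= j)%N.
  move=> W hi hj; case: (leqP i j) => h; first exact: W.
  by rewrite eq_sym W // 1?eq_sym // ltnW.
move=> /andP[i_gt0 _] /andP[_ j_lt].
case: ltngtP le_ij => // [lt_ij _ | -> _]; last by rewrite eqxx.
apply/negbTE/negP => /eqP eq_ij.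
have dvd_p : p %| 'X^(j - i) - 1.
  have : p %| 'X^i * ('X^(j - i) - 1).
    apply/modp_eq0P.
    by rewrite mulrBr mulr1 -exprD (subnKC (ltnW lt_ij)) modpD modpN eq_ij subrr.
  by rewrite Gauss_dvdpr // primitive_coprimepX.
have : (0 < j - i < 2 ^ m - 1)%N by lia.
by case: p_prim => _ [_ [_ not_dvd]] /not_dvd; rewrite dvd_p.
Qed.

(* The inverse of [eps']: index [0] encodes [0], index [a > 0] encodes [gamma^a]. *)
Definition gamma_vec (a : 'I_(2 ^ m)) : 'rV['F_2]_m :=
  if a == 0%N :> nat then 0 else \row_(i < m) ('X^a %% p)`_i.

Lemma vec2poly_row (q : {poly 'F_2}) : (size q <= m)%N -> vec2poly (\row_(i < m) q`_i) = q.
Proof.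
move=> size_q; rewrite /vec2poly; under eq_bigr do rewrite mxE.
rewrite -poly_def; apply/polyP => i; rewrite coef_poly.
by case: ltnP => // le_mi; rewrite nth_default // (leq_trans size_q).
Qed.

Lemma eps'_gamma_vec a : eps' p (gamma_vec a) = delta_mx 0 a.
Proof.
apply/rowP => j; rewrite !mxE eqxx /= /gamma_vec.
have [a0 | a_neq0] := eqVneq (a : nat) 0%N.
  rewrite /vec2poly big1 ?eqxx => [|i _]; last by rewrite mxE scale0r.
  by case: a a0 => a a_lt /= a0; subst a.
rewrite vec2poly_row; last first.
  by case: p_prim => size_p _; rewrite -ltnS -size_p ltn_modp -size_poly_eq0 size_p.
rewrite (negbTE (primitive_modpX_neq0 _)).
case: (posnP j) => [j0 | j_gt0]; last by rewrite primitive_modpX_inj ?j_gt0 ?lt0n ?a_neq0 ?ltn_ord.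
by rewrite /=; case: (j =P a) => // ja; rewrite -ja j0 eqxx in a_neq0.
Qed.

Lemma eps'_onto a : exists w : 'rV_m, eps' p w = delta_mx 0 a.
Proof. by exists (gamma_vec a); apply: eps'_gamma_vec. Qed.

Lemma eps'_delta (w : 'rV_m) : exists a, eps' p w = delta_mx 0 a.
Proof.
have gamma_inj : injective gamma_vec.
  move=> a a' /(congr1 (eps' p)); rewrite !eps'_gamma_vec => /rowP/(_ a).
  by rewrite !mxE !eqxx /=; case: (a =P a').
have [gamma_inv _ gammaK] : bijective gamma_vec.
  by apply: inj_card_bij gamma_inj _; rewrite card_mx card_Fp // card_ord mul1n.
by exists (gamma_inv w); rewrite -eps'_gamma_vec gammaK.
Qed.

End PrimitivePoly.

Theorem mainTheorem8 (m b t : nat) (p : {poly 'F_2}) (M : 'M['F_2]_(b * m)) :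
  (1 <= m)%N -> (1 <= b)%N ->
  primitive_poly m p ->
  M \in unitmx ->
  mx_order M t ->
  (2 ^ m * b - (b - 1) <=
     \dim <<[seq alpha t p M v | v : 'rV['F_2]_(b * m)]>>%VS <=
     (2 ^ m * b - (b - 1)) * t)%N.
Proof.
move=> m_gt0 b_gt0 p_prim _ [t_gt0 _].
have := dim_span_orbit_code (eps' p) M t_gt0.
rewrite /= span_blockwise; [|exact: eps'_delta|exact: eps'_onto].
rewrite dim_onehot_space ?expn_gt0 // => /andP[lower upper].
by apply/andP; split; [exact: lower | rewrite (mulnC _ t); exact: upper].
Qed.
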